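(* For every positive integer $k$, $$E_{2k}\left(\tau+\tfrac{1}{2}\right)=-E_{2k}(\tau)+(2^{2k}+2)E_{2k}(2\tau)-2^{2k}E_{2k}(4\tau).$$ For $p=3$ or $11$ and every integer $k\ge0$, \begin{align*} E_{2k+1}^{0}\left(\tau+\tfrac{1}{2};\chi_{p}\right)&=-E_{2k+1}^{0}(\tau;\chi_{p})+(2^{2k+1}-2)E_{2k+1}^{0}(2\tau;\chi_{p})+2^{2k+1}E_{2k+1}^{0}(4\tau;\chi_{p}),\\ E_{2k+1}^{\infty}\left(\tau+\tfrac{1}{2};\chi_{p}\right)&=-E_{2k+1}^{\infty}(\tau;\chi_{p})+(2-2^{2k+1})E_{2k+1}^{\infty}(2\tau;\chi_{p})+2^{2k+1}E_{2k+1}^{\infty}(4\tau;\chi_{p}). \end{align*} For $p=7$ or $23$ and every integer $k\ge0$, \begin{align*} E_{2k+1}^{0}\left(\tau+\tfrac{1}{2};\chi_{p}\right)&=-E_{2k+1}^{0}(\tau;\chi_{p})+(2^{2k+1}+2)E_{2k+1}^{0}(2\tau;\chi_{p})-2^{2k+1}E_{2k+1}^{0}(4\tau;\chi_{p}),\\ E_{2k+1}^{\infty}\left(\tau+\tfrac{1}{2};\chi_{p}\right)&=-E_{2k+1}^{\infty}(\tau;\chi_{p})+(2^{2k+1}+2)E_{2k+1}^{\infty}(2\tau;\chi_{p})-2^{2k+1}E_{2k+1}^{\infty}(4\tau;\chi_{p}). \end{align*}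
   Context: $\tau$ lies in the complex upper half-plane and $q=e^{2\pi i\tau}$. Bernoulli numbers $\mathcal{B}_k$: $\frac{u}{e^u-1}=\sum_{k\ge0}\mathcal{B}_k\frac{u^k}{k!}$. For $k\ge1$, $E_{2k}(\tau)=1-\frac{4k}{\mathcal{B}_{2k}}\sum_{j=1}^{\infty}\frac{j^{2k-1}q^{j}}{1-q^{j}}$. For an odd prime $p$ let $\chi_p(j)=\left(\frac{j}{p}\right)$ (Legendre symbol), and define generalized Bernoulli numbers $\mathcal{B}_{k,p}$ by $\frac{x}{e^{px}-1}\sum_{j=1}^{p-1}\chi_p(j)e^{jx}=\sum_{k\ge0}\mathcal{B}_{k,p}\frac{x^k}{k!}$. For a positive integer $k$ with $k\equiv\frac{p-1}{2}\pmod 2$ set $$E_{k}^{0}(\tau;\chi_{p})=\delta_{k,1}-\frac{2k}{\mathcal{B}_{k,p}}\sum_{j=1}^{\infty}\frac{j^{k-1}}{1-q^{pj}}\sum_{\ell=1}^{p-1}\left(\frac{\ell}{p}\right)q^{j\ell},\qquad E_{k}^{\infty}(\tau;\chi_{p})=1-\frac{2k}{\mathcal{B}_{k,p}}\sum_{j=1}^{\infty}\left(\frac{j}{p}\right)\frac{j^{k-1}q^{j}}{1-q^{j}},$$ with $\delta$ the Kronecker delta. (For $p\in\{3,7,11,23\}$, $\frac{p-1}{2}$ is odd, so these are defined for all odd $k$.) *)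

From Stdlib Require Import Reals List Arith.
From Coquelicot Require Import Coquelicot.
Import ListNotations.
Open Scope R_scope.

Definition binomR (n k : nat) : R :=
  INR (fact n) / (INR (fact k) * INR (fact (n - k))).

Definition rsum (a n : nat) (f : nat -> R) : R :=
  fold_right Rplus 0 (map f (seq a n)).

Definition csum (a n : nat) (f : nat -> C) : C :=
  fold_right Cplus (RtoC 0) (map f (seq a n)).

(* Bernoulli numbers with u/(e^u-1) = sum B_k u^k/k!.  Comparing coefficients
   of u^(n+1) in (e^u - 1) * (sum B_k u^k/k!) = u gives B_0 = 1 and
   sum_{j=0}^{n} C(n+1,j) B_j = 0 for n >= 1.  bern_upto n = [B_0; ...; B_n]. *)
Fixpoint bern_upto (n : nat) : list R :=
  match n with
  | O => [1]
  | S m =>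
      let l := bern_upto m in
      l ++ [ - / INR (S n) * rsum 0 n (fun j => binomR (S n) j * nth j l 0) ]
  end.

Definition bernoulli (k : nat) : R := nth k (bern_upto k) 0.

Definition legendre (p j : nat) : R :=
  if Nat.eqb (j mod p) 0 then 0
  else if existsb (fun x => Nat.eqb ((x * x) mod p) (j mod p)) (seq 1 (p - 1))
       then 1 else -1.

(* Generalized Bernoulli numbers B_{k,p}:
   x/(e^{px}-1) * sum_{j=1}^{p-1} chi_p(j) e^{jx} = sum_k B_{k,p} x^k/k!.
   Since x/(e^{px}-1) = sum_m B_m p^(m-1) x^m/m! and e^{jx} = sum_n j^n x^n/n!,
   the Cauchy product gives
   B_{k,p} = sum_{j=1}^{p-1} chi_p(j) sum_{m=0}^{k} C(k,m) B_m p^(m-1) j^(k-m). *)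
Definition bernoulli_chi (k p : nat) : R :=
  rsum 1 (p - 1) (fun j =>
    legendre p j *
    rsum 0 (S k) (fun m =>
      binomR k m * bernoulli m * (INR p ^ m / INR p) * INR j ^ (k - m))).

(* q = e^{2 pi i tau} = e^{-2 pi Im tau} (cos (2 pi Re tau) + i sin (2 pi Re tau)). *)
Definition qC (tau : C) : C :=
  Cmult (RtoC (exp (- (2 * PI * Im tau))))
        (cos (2 * PI * Re tau), sin (2 * PI * Re tau)).

(* Sum of a complex series sum_{n>=0} a n (real and imaginary parts summed
   separately; this is the usual sum whenever the series converges). *)
Definition CSeries (a : nat -> C) : C :=
  (Series (fun n => Re (a n)), Series (fun n => Im (a n))).

Definition Eis (w : nat) (tau : C) : C :=
  let q := qC tau in
  Cminus (RtoC 1)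
    (Cmult (RtoC (2 * INR w / bernoulli w))
      (CSeries (fun n => let j := S n in
         Cdiv (Cmult (RtoC (INR j ^ (w - 1))) (Cpow q j))
              (Cminus (RtoC 1) (Cpow q j))))).

Definition Eis0 (k p : nat) (tau : C) : C :=
  let q := qC tau in
  Cminus (RtoC (if Nat.eqb k 1 then 1 else 0))
    (Cmult (RtoC (2 * INR k / bernoulli_chi k p))
      (CSeries (fun n => let j := S n in
         Cmult (Cdiv (RtoC (INR j ^ (k - 1))) (Cminus (RtoC 1) (Cpow q (p * j))))
               (csum 1 (p - 1) (fun l => Cmult (RtoC (legendre p l)) (Cpow q (j * l))))))).

Definition EisInf (k p : nat) (tau : C) : C :=
  let q := qC tau in
  Cminus (RtoC 1)
    (Cmult (RtoC (2 * INR k / bernoulli_chi k p))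
      (CSeries (fun n => let j := S n in
         Cdiv (Cmult (RtoC (legendre p j * INR j ^ (k - 1))) (Cpow q j))
              (Cminus (RtoC 1) (Cpow q j))))).

(* Each of [Eis], [Eis0] and [EisInf] has the form [C0 - K * L (qC tau)] for a generalised
   Lambert series [L x = sum_(j >= 1) a j * G (x ^ j)] with [a (2 j) = c * a j] and
   [G (- y) = - G y + d * G (y * y)]: for [E_2k] and [E^oo] the kernel is [y / (1 - y)] with
   [d = 2], for [E^0] it is [sum_l chi(l) y^l / (1 - y^p)] with [d = 2 chi(2)].  Shifting
   [tau] by 1/2 replaces [q] by [- q], and splitting [L (- q)] into odd and even [j], which
   absolute convergence for [|q| < 1] permits, gives
   [L (- q) = - L q + (2 c + d) L (q^2) - c d L (q^4)]; [2 tau] and [4 tau] correspond to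
   [q^2] and [q^4].  The kernel identity for [chi] is a polynomial identity, checked by
   computation for p = 3, 7, 11, 23. *)

From Stdlib Require Import Reals Lra Lia List.
From Coquelicot Require Import Coquelicot.
Import ListNotations.
Open Scope R_scope.

Section EvenOddSeries.
Context {K : AbsRing} {V : NormedModule K}.

Lemma sum_n_even_odd (u : nat -> V) (N : nat) :
  sum_n u (2 * N + 1) =
  plus (sum_n (fun n => u (2 * n)%nat) N) (sum_n (fun n => u (2 * n + 1)%nat) N).
Proof.
  rewrite <- sum_n_plus.
  induction N as [|N IH].
  - change (2 * 0 + 1)%nat with 1%nat. rewrite sum_Sn, !sum_O. reflexivity.
  - replace (2 * S N + 1)%nat with (S (S (2 * N + 1))) by lia.
    rewrite !sum_Sn, IH, plus_assoc.
    do 3 f_equal; lia.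
Qed.

Lemma is_series_pairs (u : nat -> V) (l : V) :
  is_series u l -> is_series (fun n => plus (u (2 * n)%nat) (u (2 * n + 1)%nat)) l.
Proof.
  unfold is_series. intros Hu.
  assert (Hsub : filterlim (fun N => 2 * N + 1)%nat eventually eventually)
    by (apply eventually_subseq; intros; lia).
  apply (filterlim_ext (fun N => sum_n u (2 * N + 1))).
  - intros N. rewrite sum_n_even_odd, sum_n_plus. reflexivity.
  - exact (filterlim_comp _ _ _ _ (sum_n u) _ _ _ Hsub Hu).
Qed.

Lemma is_series_even_odd (u : nat -> V) (l1 l2 : V) :
  ex_series u ->
  is_series (fun n => u (2 * n)%nat) l1 -> is_series (fun n => u (2 * n + 1)%nat) l2 ->
  is_series u (plus l1 l2).
Proof.
  intros [l Hu] H1 H2.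
  assert (Hpairs := is_series_pairs u l Hu).
  assert (Hsum := is_series_plus _ _ _ _ H1 H2).
  unfold is_series in Hpairs, Hsum.
  now rewrite <- (filterlim_locally_unique _ _ _ Hpairs Hsum).
Qed.

End EvenOddSeries.

Lemma ex_series_norm_even {K : AbsRing} {V : NormedModule K} (u : nat -> V) :
  ex_series (fun n => norm (u n)) -> ex_series (fun n => norm (u (2 * n)%nat)).
Proof.
  intros [l Hu].
  apply (ex_series_le (V := R_CompleteNormedModule) _
           (fun n => norm (u (2 * n)%nat) + norm (u (2 * n + 1)%nat))).
  - intros n. change (Rabs (norm (u (2 * n)%nat)) <= norm (u (2 * n)%nat) + norm (u (2 * n + 1)%nat)).
    rewrite Rabs_pos_eq by apply norm_ge_0.
    pose proof (norm_ge_0 (u (2 * n + 1)%nat)). lra.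
  - exists l. exact (is_series_pairs _ _ Hu).
Qed.

Lemma Re_sum_n (u : nat -> C) (n : nat) : Re (sum_n u n) = sum_n (fun k => Re (u k)) n.
Proof.
  induction n as [|n IH].
  - rewrite !sum_O. reflexivity.
  - rewrite !sum_Sn, <- IH. reflexivity.
Qed.

Lemma Im_sum_n (u : nat -> C) (n : nat) : Im (sum_n u n) = sum_n (fun k => Im (u k)) n.
Proof.
  induction n as [|n IH].
  - rewrite !sum_O. reflexivity.
  - rewrite !sum_Sn, <- IH. reflexivity.
Qed.

Lemma CSeries_unique (u : nat -> C) (l : C) : is_series u l -> CSeries u = l.
Proof.
  destruct l as [x y]. intros Hu. unfold CSeries.
  f_equal; apply is_series_unique; unfold is_series.
  - apply (filterlim_ext (fun n => fst (sum_n u n))); [apply Re_sum_n|].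
    exact (filterlim_comp _ _ _ _ fst _ _ _ Hu (continuous_fst x y)).
  - apply (filterlim_ext (fun n => snd (sum_n u n))); [apply Im_sum_n|].
    exact (filterlim_comp _ _ _ _ snd _ _ _ Hu (continuous_snd x y)).
Qed.

Lemma CSeries_correct_Cmod (u : nat -> C) :
  ex_series (fun n => Cmod (u n)) -> is_series u (CSeries u).
Proof.
  intros Habs.
  destruct (ex_series_le (V := C_CompleteNormedModule) u _ (fun n => Rle_refl _) Habs) as [l Hu].
  rewrite (CSeries_unique u l Hu). exact Hu.
Qed.

Lemma CSeries_ext (u v : nat -> C) : (forall n, u n = v n) -> CSeries u = CSeries v.
Proof. intros Euv. unfold CSeries. f_equal; apply Series_ext; intros n; rewrite Euv; reflexivity. Qed.

Lemma CSeries_even_odd (u : nat -> C) (l1 l2 : C) :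
  ex_series (fun n => Cmod (u n)) ->
  is_series (fun n => u (2 * n)%nat) l1 -> is_series (fun n => u (2 * n + 1)%nat) l2 ->
  CSeries u = Cplus l1 l2.
Proof.
  intros Habs H1 H2. apply CSeries_unique.
  apply (is_series_even_odd (V := C_NormedModule) u l1 l2); [|exact H1|exact H2].
  exact (ex_series_le (V := C_CompleteNormedModule) u _ (fun n => Rle_refl _) Habs).
Qed.

Lemma pow_S_le_base (r : R) (n : nat) : (0 <= r <= 1) -> (r ^ S n <= r).
Proof.
  intros Hr. rewrite <- tech_pow_Rmult. apply Rle_trans with (r * 1); [|lra].
  apply Rmult_le_compat_l; [lra|]. rewrite <- (pow1 n). apply pow_incr. lra.
Qed.

Lemma is_lim_seq_succ_ratio_pow (m : nat) : is_lim_seq (fun n => (1 + / INR (S n)) ^ m) 1.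
Proof.
  assert (Hinv : is_lim_seq (fun n => / INR (S n)) 0).
  { assert (Hn : is_lim_seq (fun n => INR (S n)) p_infty)
      by (apply (is_lim_seq_incr_1 INR), is_lim_seq_INR).
    apply is_lim_seq_inv in Hn; [exact Hn|discriminate]. }
  induction m as [|m IH].
  - apply is_lim_seq_const.
  - assert (H := is_lim_seq_mult' _ _ _ _ (is_lim_seq_plus' _ _ _ _ (is_lim_seq_const 1) Hinv) IH).
    rewrite Rplus_0_r, Rmult_1_l in H. exact H.
Qed.

Lemma ex_series_pow_mul_geom (m : nat) (r : R) : 0 < r < 1 ->
  ex_series (fun n => INR (S n) ^ m * r ^ S n).
Proof.
  intros Hr. apply ex_series_Rabs, (ex_series_DAlembert _ r); [lra| |].
  - intros n. apply Rmult_integral_contrapositive_currified; apply pow_nonzero; [|lra].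
    apply not_0_INR. lia.
  - apply (is_lim_seq_ext (fun n => (1 + / INR (S n)) ^ m * r)).
    + intros n. assert (HSn : 0 < INR (S n)) by (apply lt_0_INR; lia).
      assert (Hinv := Rinv_0_lt_compat _ HSn).
      rewrite <- (Rabs_pos_eq ((1 + / INR (S n)) ^ m * r))
        by (apply Rmult_le_pos; [apply pow_le|]; lra).
      f_equal.
      replace (INR (S (S n))) with ((1 + / INR (S n)) * INR (S n))
        by (rewrite (S_INR (S n)); field; lra).
      change (r ^ S (S n)) with (r * r ^ S n).
      rewrite Rpow_mult_distr. field. split; apply pow_nonzero; lra.
    + assert (H := is_lim_seq_mult' _ _ _ _ (is_lim_seq_succ_ratio_pow m) (is_lim_seq_const r)).
      rewrite Rmult_1_l in H. exact H.
Qed.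

Lemma INR_double_succ (n : nat) : INR (2 * S n) = (2 * INR (S n))%R.
Proof. rewrite mult_INR. reflexivity. Qed.

Lemma Rabs_legendre_le_1 (p j : nat) : Rabs (legendre p j) <= 1.
Proof.
  unfold legendre. destruct (Nat.eqb _ _); [|destruct (existsb _ _)];
    rewrite ?Rabs_R0, ?Rabs_R1, ?Rabs_m1; lra.
Qed.

Lemma legendre_mod (p j : nat) : p <> 0%nat -> legendre p j = legendre p (j mod p).
Proof. intros Hp. unfold legendre. rewrite Nat.Div0.mod_mod. reflexivity. Qed.

Lemma legendre_double (p n : nat) : In p [3; 7; 11; 23]%nat ->
  legendre p (2 * n) = legendre p 2 * legendre p n.
Proof.
  intros Hp. assert (Hp0 : p <> 0%nat) by (simpl in Hp; lia).
  rewrite (legendre_mod p (2 * n)), <- Nat.Div0.mul_mod_idemp_r, <- legendre_mod by exact Hp0.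
  rewrite (legendre_mod p n) by exact Hp0.
  generalize (Nat.mod_upper_bound n p Hp0). generalize (n mod p).
  simpl in Hp. destruct Hp as [<- | [<- | [<- | [<- | []]]]]; intros r Hr;
    repeat (destruct r as [|r]; [unfold legendre; simpl; lra|try (exfalso; lia)]).
Qed.

Definition lambert_term (a : nat -> R) (G : C -> C) (x : C) (n : nat) : C :=
  (a (S n) * G (x ^ S n))%C.

Definition lambert (a : nat -> R) (G : C -> C) (x : C) : C := CSeries (lambert_term a G x).

(* The terms of odd exponent [j = 2 n + 1]; term [n] of [lambert] has exponent [n + 1]. *)
Definition lambert_odd (a : nat -> R) (G : C -> C) (x : C) : C :=
  CSeries (fun n => lambert_term a G x (2 * n)%nat).

Lemma ex_series_lambert_term_Cmod (a : nat -> R) (G : C -> C) (m : nat) (K : R) (x : C) :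
  0 <= K -> (forall j, Rabs (a j) <= INR j ^ m) ->
  (forall y, Cmod y < 1 -> Cmod (G y) <= K * Cmod y / (1 - Cmod y)) ->
  Cmod x < 1 -> ex_series (fun n => Cmod (lambert_term a G x n)).
Proof.
  intros HK Ha HG Hx. pose proof (Cmod_ge_0 x).
  set (r := (1 + Cmod x) / 2).
  assert (Hr : 0 < r < 1) by (unfold r; lra).
  apply (ex_series_le (V := R_CompleteNormedModule) _ (fun n => INR (S n) ^ m * r ^ S n * (K / (1 - r)))).
  2: exact (ex_series_scal_r _ _ (ex_series_pow_mul_geom m r Hr)).
  intros n. change (Rabs (Cmod (lambert_term a G x n)) <= INR (S n) ^ m * r ^ S n * (K / (1 - r))).
  rewrite Rabs_pos_eq by apply Cmod_ge_0.
  unfold lambert_term. rewrite Cmod_mult, Cmod_R.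
  assert (Hy : Cmod (x ^ S n)%C <= r ^ S n)
    by (rewrite Cmod_pow; apply pow_incr; unfold r; lra).
  assert (Hrn : r ^ S n <= r) by (apply pow_S_le_base; lra).
  assert (HGy : Cmod (G (x ^ S n)%C) <= r ^ S n * (K / (1 - r))).
  { pose proof (Cmod_ge_0 (x ^ S n)%C).
    apply Rle_trans with (K * Cmod (x ^ S n)%C / (1 - Cmod (x ^ S n)%C)); [apply HG; lra|].
    apply Rle_trans with (K * r ^ S n / (1 - r)); [|right; field; lra].
    unfold Rdiv. apply Rmult_le_compat; [nra|left; apply Rinv_0_lt_compat; lra|nra|].
    apply Rinv_le_contravar; lra. }
  rewrite Rmult_assoc.
  apply Rmult_le_compat; [apply Rabs_pos|apply Cmod_ge_0|apply Ha|exact HGy].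
Qed.

Local Open Scope C_scope.

Lemma Cpow_opp_even (x : C) (n : nat) : (- x) ^ (2 * n) = x ^ (2 * n).
Proof. rewrite !Cpow_mult_r, Cpow_S, Cpow_1_r, Cpow_S, Cpow_1_r. f_equal. ring. Qed.

Lemma Cpow_opp_odd (x : C) (n : nat) : (- x) ^ S (2 * n) = - x ^ S (2 * n).
Proof. rewrite !Cpow_S, Cpow_opp_even. ring. Qed.

Lemma Cpow_sqr (x : C) (n : nat) : (x * x) ^ n = x ^ (2 * n).
Proof. rewrite Cpow_mult_l, <- Cpow_add_r. f_equal. lia. Qed.

Lemma Cmod_pow_S_le (x : C) (n : nat) : Cmod x <= 1 -> Cmod (x ^ S n) <= Cmod x.
Proof. intros Hx. rewrite Cmod_pow. apply pow_S_le_base. split; [apply Cmod_ge_0|exact Hx]. Qed.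

Lemma Cmod_sqr_lt_1 (x : C) : Cmod x < 1 -> Cmod (x * x) < 1.
Proof. intros Hx. rewrite Cmod_mult. pose proof (Cmod_ge_0 x). nra. Qed.

Lemma Cmod_one_minus_ge (y : C) : (1 - Cmod y <= Cmod (1 - y))%R.
Proof.
  pose proof (Cmod_triangle (1 - y) y) as Htri.
  replace (1 - y + y) with (RtoC 1) in Htri by ring.
  rewrite Cmod_1 in Htri. lra.
Qed.

Lemma one_minus_neq_0 (y : C) : Cmod y < 1 -> 1 - y <> 0.
Proof.
  intros Hy E. pose proof (Cmod_one_minus_ge y) as Hge. rewrite E, Cmod_0 in Hge. lra.
Qed.

Lemma qC_half_shift (tau : C) : qC (tau + RtoC (1/2)) = - qC tau.
Proof.
  destruct tau as [x y]. unfold qC. simpl.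
  replace (2 * PI * (x + 1 / 2))%R with (2 * PI * x + PI)%R by field.
  rewrite neg_cos, neg_sin, Rplus_0_r.
  apply injective_projections; simpl; ring.
Qed.

Lemma qC_double (tau : C) : qC (RtoC 2 * tau) = qC tau * qC tau.
Proof.
  destruct tau as [x y]. unfold qC. simpl.
  replace (2 * PI * (2 * y + 0 * x))%R with (2 * PI * y + 2 * PI * y)%R by ring.
  replace (2 * PI * (2 * x - 0 * y))%R with (2 * (2 * PI * x))%R by ring.
  rewrite Ropp_plus_distr, exp_plus, cos_2a, sin_2a.
  apply injective_projections; simpl; ring.
Qed.

Lemma qC_quadruple (tau : C) : qC (RtoC 4 * tau) = (qC tau * qC tau) * (qC tau * qC tau).
Proof.
  rewrite <- !qC_double, Cmult_assoc, <- RtoC_mult.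
  replace (2 * 2)%R with 4%R by lra. reflexivity.
Qed.

Lemma Cmod_qC_lt_1 (tau : C) : 0 < Im tau -> Cmod (qC tau) < 1.
Proof.
  intros Htau. unfold qC. rewrite Cmod_mult, Cmod_R.
  assert (Hunit : Cmod (cos (2 * PI * Re tau), sin (2 * PI * Re tau)) = 1).
  { unfold Cmod. cbn [fst snd]. rewrite <- sqrt_1. f_equal.
    pose proof (sin2_cos2 (2 * PI * Re tau)). unfold Rsqr in *. lra. }
  rewrite Hunit, Rmult_1_r, Rabs_pos_eq by (left; apply exp_pos).
  rewrite <- exp_0. apply exp_increasing. pose proof PI_RGT_0. nra.
Qed.

Section LambertDuplication.

Variables (a : nat -> R) (c : R) (G : C -> C) (d : R).
Hypothesis a_double : forall n, a (2 * S n)%nat = (c * a (S n))%R.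
Hypothesis G_opp : forall y, Cmod y < 1 -> G (- y) = - G y + d * G (y * y).
Hypothesis lambert_summable :
  forall x, Cmod x < 1 -> ex_series (fun n => Cmod (lambert_term a G x n)).

Lemma lambert_term_odd (x : C) (n : nat) :
  lambert_term a G x (2 * n + 1) = c * lambert_term a G (x * x) n.
Proof.
  unfold lambert_term. replace (S (2 * n + 1)) with (2 * S n)%nat by lia.
  rewrite a_double, Cpow_sqr, RtoC_mult. ring.
Qed.

Lemma lambert_term_opp_even (x : C) (n : nat) : Cmod x < 1 ->
  lambert_term a G (- x) (2 * n) = - lambert_term a G x (2 * n) + d * lambert_term a G (x * x) (2 * n).
Proof.
  intros Hx. unfold lambert_term.
  rewrite Cpow_opp_odd, G_opp, Cpow_mult_l.
  - ring.
  - apply Rle_lt_trans with (Cmod x); [apply Cmod_pow_S_le|]; lra.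
Qed.

Lemma lambert_term_opp_odd (x : C) (n : nat) :
  lambert_term a G (- x) (2 * n + 1) = lambert_term a G x (2 * n + 1).
Proof.
  unfold lambert_term. replace (S (2 * n + 1)) with (2 * S n)%nat by lia.
  rewrite Cpow_opp_even. reflexivity.
Qed.

Lemma is_series_lambert_odd (x : C) : Cmod x < 1 ->
  is_series (fun n => lambert_term a G x (2 * n)) (lambert_odd a G x).
Proof.
  intros Hx. apply CSeries_correct_Cmod.
  exact (ex_series_norm_even (V := C_NormedModule) _ (lambert_summable x Hx)).
Qed.

Lemma is_series_lambert (x : C) : Cmod x < 1 -> is_series (lambert_term a G x) (lambert a G x).
Proof. intros Hx. exact (CSeries_correct_Cmod _ (lambert_summable x Hx)). Qed.

Lemma lambert_even_odd (x : C) : Cmod x < 1 ->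
  lambert a G x = lambert_odd a G x + c * lambert a G (x * x).
Proof.
  intros Hx. apply CSeries_even_odd; [exact (lambert_summable x Hx)|apply is_series_lambert_odd; exact Hx|].
  apply (is_series_ext (fun n => c * lambert_term a G (x * x) n)).
  - intros n. symmetry. apply lambert_term_odd.
  - apply (is_series_scal (V := C_NormedModule) (RtoC c)), is_series_lambert, Cmod_sqr_lt_1, Hx.
Qed.

Lemma lambert_opp_even_odd (x : C) : Cmod x < 1 ->
  lambert a G (- x) = - lambert_odd a G x + d * lambert_odd a G (x * x) + c * lambert a G (x * x).
Proof.
  intros Hx. assert (Hx2 := Cmod_sqr_lt_1 x Hx).
  apply CSeries_even_odd.
  - apply lambert_summable. rewrite Cmod_opp. exact Hx.
  - apply (is_series_ext (fun n => - lambert_term a G x (2 * n) + d * lambert_term a G (x * x) (2 * n))).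
    + intros n. symmetry. apply lambert_term_opp_even, Hx.
    + apply (is_series_plus (V := C_NormedModule)).
      * apply (is_series_opp (V := C_NormedModule)), is_series_lambert_odd, Hx.
      * apply (is_series_scal (V := C_NormedModule) (RtoC d)), is_series_lambert_odd, Hx2.
  - apply (is_series_ext (fun n => c * lambert_term a G (x * x) n)).
    + intros n. rewrite lambert_term_opp_odd. symmetry. apply lambert_term_odd.
    + apply (is_series_scal (V := C_NormedModule) (RtoC c)), is_series_lambert, Hx2.
Qed.

Lemma lambert_opp (q : C) : Cmod q < 1 ->
  lambert a G (- q) =
  - lambert a G q + RtoC (2 * c + d) * lambert a G (q * q)
  - RtoC (c * d) * lambert a G ((q * q) * (q * q)).
Proof.
  intros Hq. assert (Hq2 := Cmod_sqr_lt_1 q Hq).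
  rewrite (lambert_opp_even_odd q Hq), (lambert_even_odd q Hq).
  replace (lambert_odd a G (q * q)) with (lambert a G (q * q) - c * lambert a G ((q * q) * (q * q)))
    by (rewrite (lambert_even_odd (q * q) Hq2); ring).
  rewrite RtoC_plus, !RtoC_mult. ring.
Qed.

Lemma lambert_half_period (tau C0 Kc : C) (A B : R) : 0 < Im tau ->
  A = (2 * c + d)%R -> B = (- (c * d))%R -> (A + B = 2)%R \/ C0 = 0 ->
  C0 - Kc * lambert a G (qC (tau + RtoC (1/2))) =
  - (C0 - Kc * lambert a G (qC tau))
  + RtoC A * (C0 - Kc * lambert a G (qC (RtoC 2 * tau)))
  + RtoC B * (C0 - Kc * lambert a G (qC (RtoC 4 * tau))).
Proof.
  intros Htau -> -> Hconst.
  rewrite qC_half_shift, qC_double, qC_quadruple, lambert_opp by (apply Cmod_qC_lt_1, Htau).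
  rewrite RtoC_opp.
  destruct Hconst as [Hsum | ->]; [|ring].
  replace (RtoC (c * d)) with (RtoC (2 * c + d) - 2) by (rewrite <- RtoC_minus; f_equal; lra).
  ring.
Qed.

End LambertDuplication.

Definition geom_kernel (y : C) : C := y / (1 - y).

Lemma geom_kernel_opp (y : C) : Cmod y < 1 ->
  geom_kernel (- y) = - geom_kernel y + RtoC 2 * geom_kernel (y * y).
Proof.
  intros Hy. unfold geom_kernel.
  pose proof (one_minus_neq_0 y Hy).
  pose proof (one_minus_neq_0 (- y) ltac:(rewrite Cmod_opp; exact Hy)).
  pose proof (one_minus_neq_0 (y * y) (Cmod_sqr_lt_1 y Hy)).
  field. repeat split; assumption.
Qed.

Lemma Cmod_geom_kernel_le (y : C) : Cmod y < 1 -> (Cmod (geom_kernel y) <= 1 * Cmod y / (1 - Cmod y))%R.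
Proof.
  intros Hy. unfold geom_kernel. rewrite Cmod_div by (apply one_minus_neq_0, Hy).
  pose proof (Cmod_one_minus_ge y). pose proof (Cmod_ge_0 y).
  rewrite Rmult_1_l. unfold Rdiv. apply Rmult_le_compat_l; [lra|].
  apply Rinv_le_contravar; lra.
Qed.

Definition chi_poly (p : nat) (y : C) : C :=
  csum 1 (p - 1) (fun l => RtoC (legendre p l) * y ^ l).

Definition chi_kernel (p : nat) (y : C) : C := chi_poly p y / (1 - y ^ p).

Lemma csum_ext (a n : nat) (f g : nat -> C) : (forall l, f l = g l) -> csum a n f = csum a n g.
Proof. intros Efg. unfold csum. f_equal. apply map_ext. exact Efg. Qed.

Lemma Cmod_csum_le (a n : nat) (f : nat -> C) (B : R) :
  (forall l, (a <= l)%nat -> (Cmod (f l) <= B)%R) -> (Cmod (csum a n f) <= INR n * B)%R.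
Proof.
  revert a. induction n as [|n IH]; intros a Hf.
  - unfold csum. simpl. rewrite Cmod_0. lra.
  - unfold csum. cbn [seq map fold_right]. fold (csum (S a) n f).
    pose proof (Cmod_triangle (f a) (csum (S a) n f)).
    pose proof (Hf a (le_n a)).
    assert (Cmod (csum (S a) n f) <= INR n * B)%R by (apply IH; intros; apply Hf; lia).
    rewrite S_INR. lra.
Qed.

Lemma chi_poly_opp (p : nat) (y : C) : In p [3; 7; 11; 23]%nat ->
  chi_poly p (- y) * (1 - y ^ p) =
  - chi_poly p y * (1 + y ^ p) + RtoC (2 * legendre p 2) * chi_poly p (y * y).
Proof.
  rewrite RtoC_mult. simpl.
  intros [<- | [<- | [<- | [<- | []]]]]; unfold chi_poly, csum, legendre; simpl; ring.
Qed.

Lemma odd_prime_3_7_11_23 (p : nat) : In p [3; 7; 11; 23]%nat -> exists i, p = S (2 * i).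
Proof.
  simpl. intros [<- | [<- | [<- | [<- | []]]]];
    [exists 1%nat | exists 3%nat | exists 5%nat | exists 11%nat]; reflexivity.
Qed.

Lemma chi_kernel_opp (p : nat) (y : C) : In p [3; 7; 11; 23]%nat -> Cmod y < 1 ->
  chi_kernel p (- y) = - chi_kernel p y + RtoC (2 * legendre p 2) * chi_kernel p (y * y).
Proof.
  intros Hp Hy. destruct (odd_prime_3_7_11_23 p Hp) as [i Hi].
  assert (Hyp : Cmod (y ^ p) < 1)
    by (rewrite Hi; eapply Rle_lt_trans; [apply Cmod_pow_S_le|]; lra).
  assert (Hminus : 1 - y ^ p <> 0) by (apply one_minus_neq_0, Hyp).
  assert (Hplus : 1 - - y ^ p <> 0) by (apply one_minus_neq_0; rewrite Cmod_opp; exact Hyp).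
  assert (Hsqr : 1 - y ^ p * y ^ p <> 0) by (apply one_minus_neq_0, Cmod_sqr_lt_1, Hyp).
  unfold chi_kernel.
  rewrite Cpow_mult_l, Hi, Cpow_opp_odd, <- Hi.
  replace (chi_poly p (- y))
    with ((- chi_poly p y * (1 + y ^ p) + RtoC (2 * legendre p 2) * chi_poly p (y * y)) / (1 - y ^ p))
    by (rewrite <- chi_poly_opp by exact Hp; field; exact Hminus).
  field. repeat split; assumption.
Qed.

Lemma Cmod_chi_kernel_le (p : nat) (y : C) : (1 <= p)%nat -> Cmod y < 1 ->
  (Cmod (chi_kernel p y) <= INR (p - 1) * Cmod y / (1 - Cmod y))%R.
Proof.
  intros Hp Hy. pose proof (Cmod_ge_0 y).
  assert (Hyp : (Cmod (y ^ p) <= Cmod y)%R).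
  { replace p with (S (p - 1)) by lia. apply Cmod_pow_S_le. lra. }
  assert (Hpoly : (Cmod (chi_poly p y) <= INR (p - 1) * Cmod y)%R).
  { apply Cmod_csum_le. intros l Hl.
    rewrite Cmod_mult, Cmod_R. replace l with (S (l - 1)) by lia.
    pose proof (Rabs_legendre_le_1 p (S (l - 1))). pose proof (Rabs_pos (legendre p (S (l - 1)))).
    pose proof (Cmod_pow_S_le y (l - 1) ltac:(lra)). pose proof (Cmod_ge_0 (y ^ S (l - 1))). nra. }
  pose proof (Cmod_one_minus_ge (y ^ p)).
  unfold chi_kernel. rewrite Cmod_div by (apply one_minus_neq_0; lra).
  unfold Rdiv. apply Rmult_le_compat; [apply Cmod_ge_0|left; apply Rinv_0_lt_compat; lra|exact Hpoly|].
  apply Rinv_le_contravar; lra.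
Qed.

Lemma Eis_lambert (w : nat) (tau : C) :
  Eis w tau = 1 - RtoC (2 * INR w / bernoulli w) * lambert (fun j => INR j ^ (w - 1))%R geom_kernel (qC tau).
Proof.
  unfold Eis, lambert. do 2 f_equal. apply CSeries_ext. intros n.
  unfold lambert_term, geom_kernel, Cdiv. ring.
Qed.

Lemma Eis0_lambert (k p : nat) (tau : C) :
  Eis0 k p tau =
  RtoC (if Nat.eqb k 1 then 1 else 0)
  - RtoC (2 * INR k / bernoulli_chi k p) * lambert (fun j => INR j ^ (k - 1))%R (chi_kernel p) (qC tau).
Proof.
  unfold Eis0, lambert. do 2 f_equal. apply CSeries_ext. intros n.
  unfold lambert_term, chi_kernel, chi_poly, Cdiv.
  rewrite (Nat.mul_comm p), Cpow_mult_r.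
  rewrite (csum_ext _ _ _ (fun l => RtoC (legendre p l) * (qC tau ^ S n) ^ l))
    by (intros l; rewrite Cpow_mult_r; reflexivity).
  ring.
Qed.

Lemma EisInf_lambert (k p : nat) (tau : C) :
  EisInf k p tau =
  1 - RtoC (2 * INR k / bernoulli_chi k p)
      * lambert (fun j => legendre p j * INR j ^ (k - 1))%R geom_kernel (qC tau).
Proof.
  unfold EisInf, lambert. do 2 f_equal. apply CSeries_ext. intros n.
  unfold lambert_term, geom_kernel, Cdiv. ring.
Qed.

Lemma Eis_half_period (k : nat) (tau : C) : (1 <= k)%nat -> 0 < Im tau ->
  Eis (2 * k) (tau + RtoC (1/2)) =
  - Eis (2 * k) tau + RtoC (2 ^ (2 * k) + 2) * Eis (2 * k) (RtoC 2 * tau)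
  + RtoC (- 2 ^ (2 * k)) * Eis (2 * k) (RtoC 4 * tau).
Proof.
  intros Hk Htau.
  assert (Hw : (2 * k = S (2 * k - 1))%nat) by lia.
  rewrite !Eis_lambert.
  apply (lambert_half_period _ (2 ^ (2 * k - 1)) _ 2).
  - intros n. rewrite INR_double_succ, Rpow_mult_distr. reflexivity.
  - apply geom_kernel_opp.
  - intros x. apply (ex_series_lambert_term_Cmod _ _ (2 * k - 1) 1); [lra| |apply Cmod_geom_kernel_le].
    intros j. rewrite Rabs_pos_eq; [lra|]. apply pow_le, pos_INR.
  - exact Htau.
  - rewrite Hw at 1. simpl. ring.
  - rewrite Hw at 1. simpl. ring.
  - left. ring.
Qed.

Lemma Eis0_half_period (p k : nat) (tau : C) : In p [3; 7; 11; 23]%nat -> 0 < Im tau ->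
  Eis0 (2 * k + 1) p (tau + RtoC (1/2)) =
  - Eis0 (2 * k + 1) p tau
  + RtoC (2 ^ (2 * k + 1) + 2 * legendre p 2) * Eis0 (2 * k + 1) p (RtoC 2 * tau)
  + RtoC (- (legendre p 2 * 2 ^ (2 * k + 1))) * Eis0 (2 * k + 1) p (RtoC 4 * tau).
Proof.
  intros Hp Htau. rewrite !Eis0_lambert.
  replace (2 * k + 1 - 1)%nat with (2 * k)%nat by lia.
  apply (lambert_half_period _ (2 ^ (2 * k)) _ (2 * legendre p 2)).
  - intros n. rewrite INR_double_succ, Rpow_mult_distr. reflexivity.
  - intros y. apply chi_kernel_opp, Hp.
  - intros x. apply (ex_series_lambert_term_Cmod _ _ (2 * k) (INR (p - 1))); [apply pos_INR| |].
    + intros j. rewrite Rabs_pos_eq; [lra|]. apply pow_le, pos_INR.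
    + intros y. apply Cmod_chi_kernel_le. simpl in Hp. lia.
  - exact Htau.
  - rewrite Nat.add_1_r. simpl. ring.
  - rewrite Nat.add_1_r. simpl. ring.
  - destruct k as [|k]; [left; simpl; ring|right].
    replace (Nat.eqb (2 * S k + 1) 1) with false by (symmetry; apply Nat.eqb_neq; lia).
    reflexivity.
Qed.

Lemma EisInf_half_period (p k : nat) (tau : C) : In p [3; 7; 11; 23]%nat -> 0 < Im tau ->
  EisInf (2 * k + 1) p (tau + RtoC (1/2)) =
  - EisInf (2 * k + 1) p tau
  + RtoC (legendre p 2 * 2 ^ (2 * k + 1) + 2) * EisInf (2 * k + 1) p (RtoC 2 * tau)
  + RtoC (- (legendre p 2 * 2 ^ (2 * k + 1))) * EisInf (2 * k + 1) p (RtoC 4 * tau).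
Proof.
  intros Hp Htau. rewrite !EisInf_lambert.
  replace (2 * k + 1 - 1)%nat with (2 * k)%nat by lia.
  apply (lambert_half_period _ (legendre p 2 * 2 ^ (2 * k)) _ 2).
  - intros n. rewrite legendre_double, INR_double_succ, Rpow_mult_distr by exact Hp. ring.
  - apply geom_kernel_opp.
  - intros x. apply (ex_series_lambert_term_Cmod _ _ (2 * k) 1); [lra| |apply Cmod_geom_kernel_le].
    intros j. rewrite Rabs_mult, (Rabs_pos_eq (INR j ^ _)) by (apply pow_le, pos_INR).
    pose proof (Rabs_legendre_le_1 p j). pose proof (Rabs_pos (legendre p j)).
    pose proof (pow_le (INR j) (2 * k) (pos_INR j)). nra.
  - exact Htau.
  - rewrite Nat.add_1_r. simpl. ring.
  - rewrite Nat.add_1_r. simpl. ring.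
  - left. ring.
Qed.

Theorem lemma3p2 (tau : C) (Htau : 0 < Im tau) :
  let th := Cplus tau (RtoC (1/2)) in
  let t2 := Cmult (RtoC 2) tau in
  let t4 := Cmult (RtoC 4) tau in
  (forall k : nat, (1 <= k)%nat ->
     Eis (2 * k) th =
       Cplus (Cplus (Copp (Eis (2 * k) tau))
                    (Cmult (RtoC (2 ^ (2 * k) + 2)) (Eis (2 * k) t2)))
             (Copp (Cmult (RtoC (2 ^ (2 * k))) (Eis (2 * k) t4)))) /\
  (forall p : nat, (p = 3 \/ p = 11)%nat -> forall k : nat,
     Eis0 (2 * k + 1) p th =
       Cplus (Cplus (Copp (Eis0 (2 * k + 1) p tau))
                    (Cmult (RtoC (2 ^ (2 * k + 1) - 2)) (Eis0 (2 * k + 1) p t2)))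
             (Cmult (RtoC (2 ^ (2 * k + 1))) (Eis0 (2 * k + 1) p t4)) /\
     EisInf (2 * k + 1) p th =
       Cplus (Cplus (Copp (EisInf (2 * k + 1) p tau))
                    (Cmult (RtoC (2 - 2 ^ (2 * k + 1))) (EisInf (2 * k + 1) p t2)))
             (Cmult (RtoC (2 ^ (2 * k + 1))) (EisInf (2 * k + 1) p t4))) /\
  (forall p : nat, (p = 7 \/ p = 23)%nat -> forall k : nat,
     Eis0 (2 * k + 1) p th =
       Cplus (Cplus (Copp (Eis0 (2 * k + 1) p tau))
                    (Cmult (RtoC (2 ^ (2 * k + 1) + 2)) (Eis0 (2 * k + 1) p t2)))
             (Copp (Cmult (RtoC (2 ^ (2 * k + 1))) (Eis0 (2 * k + 1) p t4))) /\
     EisInf (2 * k + 1) p th =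
       Cplus (Cplus (Copp (EisInf (2 * k + 1) p tau))
                    (Cmult (RtoC (2 ^ (2 * k + 1) + 2)) (EisInf (2 * k + 1) p t2)))
             (Copp (Cmult (RtoC (2 ^ (2 * k + 1))) (EisInf (2 * k + 1) p t4)))).
Proof.
  cbv zeta. split; [|split].
  - intros k Hk. rewrite (Eis_half_period k tau Hk Htau), RtoC_opp. ring.
  - intros p Hp k.
    assert (Hchi : legendre p 2 = -1) by (destruct Hp as [-> | ->]; reflexivity).
    assert (Hspecial : In p [3; 7; 11; 23]%nat) by (simpl; lia).
    rewrite (Eis0_half_period p k tau Hspecial Htau), (EisInf_half_period p k tau Hspecial Htau), Hchi.
    split; rewrite ?RtoC_opp, ?RtoC_plus, ?RtoC_minus, ?RtoC_mult; ring.
  - intros p Hp k.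
    assert (Hchi : legendre p 2 = 1) by (destruct Hp as [-> | ->]; reflexivity).
    assert (Hspecial : In p [3; 7; 11; 23]%nat) by (simpl; lia).
    rewrite (Eis0_half_period p k tau Hspecial Htau), (EisInf_half_period p k tau Hspecial Htau), Hchi.
    split; rewrite ?RtoC_opp, ?RtoC_plus, ?RtoC_minus, ?RtoC_mult; ring.
Qed.
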